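(* Let $V=\{1,\dots,n\}$ and let $F:2^V\to\mathbb{R}$ be a non-negative submodular set function with $F(\emptyset)=F(V)=0$. Define a directed graph $G=(V,E,c)$ with $E=\{(u,v)\in V\times V:u\neq v\}$ and $c_{uv}=\min\{F(A):A\subseteq V,\ u\in A,\ v\notin A\}$. Then for every $A\subseteq V$, \[\frac{1}{n^2/4}\,c^+(A)\le F(A)\le c^+(A).\] Moreover, if $F(A)\in\Delta\cdot\mathbb{Z}_{\ge0}$ for all $A$ for some $\Delta>0$, then every $c_{uv}$ is an integer multiple of $\Delta$.
   Context: For a weighted directed graph $(V,E,c)$, the cut function is $c^+(A)=\sum_{(u,v)\in E:\,u\in A,\,v\notin A}c_{uv}$ for $A\subseteq V$. *)

(* V = {1..n} is modelled as 'I_n. *)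
From mathcomp Require Import all_boot all_order all_algebra.
Set Implicit Arguments. Unset Strict Implicit. Unset Printing Implicit Defensive.
Import Order.TTheory GRing.Theory Num.Theory.
Local Open Scope ring_scope.

Definition submodular (R : realFieldType) (n : nat) (F : {set 'I_n} -> R) : Prop :=
  forall A B : {set 'I_n}, F (A :|: B) + F (A :&: B) <= F A + F B.

(* For u != v the family is nonempty
   and contains [set u], so using F [set u] as the neutral element of the
   min-fold does not change the value.  (For u = v there is no edge and the
   value is irrelevant.) *)
Definition cap (R : realFieldType) (n : nat) (F : {set 'I_n} -> R) (u v : 'I_n) : R :=
  \big[Num.min/F [set u]]_(A : {set 'I_n} | (u \in A) && (v \notin A)) F A.

Definition cut_out (R : realFieldType) (n : nat) (c : 'I_n -> 'I_n -> R)
  (A : {set 'I_n}) : R :=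
  \sum_(u in A) \sum_(v in ~: A) c u v.

From mathcomp Require Import all_boot all_order all_algebra.
From mathcomp Require Import lra.
Import Order.TTheory GRing.Theory Num.Theory.
Set Implicit Arguments. Unset Strict Implicit. Unset Printing Implicit Defensive.
Local Open Scope ring_scope.

(* For u != v, the capacity cap F u v is a minimum of F over the sets
   separating u from v; we fix a minimiser [min_sep u v].  Integrality of
   the capacities is then immediate: each is a value of F.

   Upper bound F A <= c^+(A): every A is recovered from the minimisers as
   A = \bigcup_(u in A) \bigcap_(v notin A) min_sep u v.  A non-negative
   submodular F is subadditive for unions when F(empty) = 0 and for
   intersections when F(V) = 0, so F A is at most the sum of the
   F (min_sep u v) = cap F u v over u in A, v notin A, i.e. c^+(A).

   Lower bound: each cap F u v with u in A, v notin A is at most F A, so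
   c^+(A) <= |A| |V \ A| F A, and |A| |V \ A| <= n^2/4 by AM-GM. *)

Lemma mul_le_sqr_half_sum (R : realFieldType) (x y : R) :
  x * y <= (x + y) ^+ 2 / 4.
Proof. have := sqr_ge0 (x - y); rewrite !expr2; lra. Qed.

Lemma quarter_sqr_normalised_le1 (R : realFieldType) (k m : nat) :
  1 / ((k + m)%:R ^+ 2 / 4) * (k * m)%:R <= 1 :> R.
Proof.
have [->|km_pos] := posnP (k + m)%N.
  by rewrite expr0n /= mul0r invr0 mulr0 mul0r.
have quarter_pos : 0 < ((k + m)%:R ^+ 2 / 4 : R).
  by rewrite divr_gt0 // exprn_gt0 // ltr0n.
rewrite mulrC mulrA mulr1 ler_pdivrMr // mul1r natrM natrD.
exact: mul_le_sqr_half_sum.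
Qed.

Section CutApproximation.
Variables (R : realFieldType) (n : nat) (F : {set 'I_n} -> R).

Definition separates (u v : 'I_n) (A : {set 'I_n}) : bool :=
  (u \in A) && (v \notin A).

Definition min_sep (u v : 'I_n) : {set 'I_n} :=
  Order.arg_min [set u] (separates u v) F.

Lemma cap_le_separating (u v : 'I_n) (A : {set 'I_n}) :
  u \in A -> v \notin A -> cap F u v <= F A.
Proof. by move=> uA vA; apply: bigmin_le_cond; rewrite uA vA. Qed.

Lemma min_sepP (u v : 'I_n) : u != v ->
  [/\ u \in min_sep u v, v \notin min_sep u v & cap F u v = F (min_sep u v)].
Proof.
move=> uv; have sep_u : separates u v [set u].
  by rewrite /separates set11 in_set1 eq_sym.
rewrite /min_sep; case: arg_minP => // B /andP[uB vB] Bmin.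
split => //; apply/le_anti/andP; split; first exact: cap_le_separating.
by apply/bigmin_geP; split => [|A /Bmin]; first exact: Bmin.
Qed.

Lemma min_sep_decomposition (A : {set 'I_n}) :
  A = \bigcup_(u in A) \bigcap_(v in ~: A) min_sep u v.
Proof.
apply/setP => x; apply/idP/idP => [xA|].
  apply/bigcupP; exists x => //; apply/bigcapP => v; rewrite in_setC => vA.
  have xv : x != v by apply: contraNneq vA => <-.
  by case: (min_sepP xv).
case/bigcupP => u uA /bigcapP sep_all; apply/negPn/negP => xA.
have ux : u != x by apply: contraNneq xA => <-.
have := sep_all x; rewrite in_setC xA => /(_ isT).
by case: (min_sepP ux) => _ /negbTE ->.
Qed.

Lemma cut_out_le_card_mul (A : {set 'I_n}) :
  cut_out (cap F) A <= (#|A| * #|~: A|)%:R * F A.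
Proof.
apply: le_trans (_ : \sum_(u in A) \sum_(v in ~: A) F A <= _).
  apply: ler_sum => u uA; apply: ler_sum => v vA.
  by apply: cap_le_separating; rewrite // -in_setC.
by rewrite !sumr_const -mulrnA mulr_natl mulnC.
Qed.

Hypotheses (F_ge0 : forall A, 0 <= F A) (F_sub : submodular F).

Lemma F_setU_le (X Y : {set 'I_n}) : F (X :|: Y) <= F X + F Y.
Proof. have := F_sub X Y; have := F_ge0 (X :&: Y); lra. Qed.

Lemma F_setI_le (X Y : {set 'I_n}) : F (X :&: Y) <= F X + F Y.
Proof. have := F_sub X Y; have := F_ge0 (X :|: Y); lra. Qed.

Lemma F_bigcup_le (S : {set 'I_n}) (X : 'I_n -> {set 'I_n}) :
  F set0 = 0 -> F (\bigcup_(i in S) X i) <= \sum_(i in S) F (X i).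
Proof.
move=> F0; apply: (big_ind2 (fun U s => F U <= s)) => //; first by rewrite F0.
by move=> ? ? ? ? le1 le2; apply: le_trans (F_setU_le _ _) (lerD le1 le2).
Qed.

Lemma F_bigcap_le (S : {set 'I_n}) (X : 'I_n -> {set 'I_n}) :
  F setT = 0 -> F (\bigcap_(i in S) X i) <= \sum_(i in S) F (X i).
Proof.
move=> FV; apply: (big_ind2 (fun U s => F U <= s)) => //; first by rewrite FV.
by move=> ? ? ? ? le1 le2; apply: le_trans (F_setI_le _ _) (lerD le1 le2).
Qed.

Lemma F_le_cut_out (A : {set 'I_n}) :
  F set0 = 0 -> F setT = 0 -> F A <= cut_out (cap F) A.
Proof.
move=> F0 FV; rewrite {1}(min_sep_decomposition A).
apply: le_trans (F_bigcup_le _ _ F0) _; apply: ler_sum => u uA.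
apply: le_trans (F_bigcap_le _ _ FV) _; apply: ler_sum => v vA.
have uv : u != v by apply: contraTneq vA => <-; rewrite in_setC uA.
by case: (min_sepP uv) => _ _ ->.
Qed.

Lemma scaled_cut_out_le_F (A : {set 'I_n}) :
  1 / (n%:R ^+ 2 / 4) * cut_out (cap F) A <= F A.
Proof.
have scale_ge0 : 0 <= 1 / (n%:R ^+ 2 / 4 : R).
  by rewrite divr_ge0 // divr_ge0 // exprn_ge0.
apply: le_trans (ler_wpM2l scale_ge0 (cut_out_le_card_mul A)) _.
rewrite mulrA -[leRHS]mul1r ler_wpM2r //.
by rewrite -[n in n%:R](card_ord n) -(cardsC A) quarter_sqr_normalised_le1.
Qed.

End CutApproximation.

Theorem mainTheorem7 (R : realFieldType) (n : nat) (F : {set 'I_n} -> R)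
  (F_ge0 : forall A, 0 <= F A) (F_sub : submodular F)
  (F0 : F set0 = 0) (FV : F setT = 0) :
  (forall A : {set 'I_n},
     1 / (n%:R ^+ 2 / 4) * cut_out (cap F) A <= F A /\ F A <= cut_out (cap F) A)
  /\
  (forall Delta : R, 0 < Delta ->
     (forall A : {set 'I_n}, exists k : nat, F A = k%:R * Delta) ->
     forall u v : 'I_n, u != v -> exists k : int, cap F u v = k%:~R * Delta).
Proof.
split=> [A|Delta _ F_mult u v uv].
  by split; [apply: scaled_cut_out_le_F | apply: F_le_cut_out].
case: (min_sepP F uv) => _ _ ->.
by case: (F_mult (min_sep F u v)) => k ->; exists k.
Qed.
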